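(* Every $n\times n$ Gram-Lorentz matrix $X$ is completely positive semidefinite, and $$\mathrm{cpsd}\text{-}\mathrm{rank}(X)\le 2^{\lfloor(\mathrm{rank}(X)+1)/2\rfloor}.$$
   Context: The $m$-dimensional Lorentz cone is $\mathcal{L}_m:=\{(c,x)\in\mathbb{R}\times\mathbb{R}^{m-1}: c\ge\|x\|\}$. An $n\times n$ real symmetric matrix $X$ is Gram-Lorentz if there exist $m\ge1$ and vectors $\ell_1,\dots,\ell_n\in\mathcal{L}_m$ with $X_{ij}=\langle\ell_i,\ell_j\rangle$ for all $i,j$. An $n\times n$ matrix $X$ is completely positive semidefinite (cpsd) if there exist $d\ge1$ and Hermitian positive semidefinite $d\times d$ matrices $P_1,\dots,P_n$ with $X_{ij}=\mathrm{Tr}(P_iP_j)$ for all $i,j$; the cpsd-rank of $X$ is the least such $d$. *)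

From mathcomp Require Import all_boot all_order all_algebra.
From mathcomp Require Import reals complex.
Set Implicit Arguments. Unset Strict Implicit. Unset Printing Implicit Defensive.
Import Order.TTheory GRing.Theory Num.Theory.
Local Open Scope ring_scope.

(* The Lorentz cone L_{1+k} = {(c,x) in R x R^k : c >= ||x||}, vectors as
   row vectors of length 1 + k (so the dimension m = 1 + k is >= 1). *)
Definition in_lorentz (R : realType) (k : nat) (l : 'rV[R]_(1 + k)) : Prop :=
  Num.sqrt (\sum_(i < k) (rsubmx l) 0 i ^+ 2) <= (lsubmx l) 0 0.

Definition rdot (R : realType) (m : nat) (u v : 'rV[R]_m) : R :=
  \sum_(i < m) u 0 i * v 0 i.

Definition gram_lorentz (R : realType) (n : nat) (X : 'M[R]_n) : Prop :=
  exists (k : nat) (l : 'I_n -> 'rV[R]_(1 + k)),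
    (forall i, in_lorentz (l i)) /\ (forall i j, X i j = rdot (l i) (l j)).

Definition hermitian_mx (R : realType) (d : nat) (P : 'M[R[i]]_d) : Prop :=
  (map_mx Num.conj P)^T = P.

Definition hpsd_mx (R : realType) (d : nat) (P : 'M[R[i]]_d) : Prop :=
  hermitian_mx P /\
  forall v : 'cV[R[i]]_d, 0 <= ((map_mx Num.conj v)^T *m P *m v) 0 0.

Definition cpsd_factorization (R : realType) (n : nat) (X : 'M[R]_n) (d : nat)
  : Prop :=
  exists P : 'I_n -> 'M[R[i]]_d,
    (forall i, hpsd_mx (P i)) /\
    (forall i j, (X i j)%:C%C = \tr (P i *m P j)).

Definition cpsd (R : realType) (n : nat) (X : 'M[R]_n) : Prop :=
  exists d, (1 <= d)%N /\ cpsd_factorization X d.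

From mathcomp Require Import all_boot all_order all_algebra.
From mathcomp Require Import reals complex.
From mathcomp Require Import zify ring.
Set Implicit Arguments. Unset Strict Implicit. Unset Printing Implicit Defensive.
Import Order.TTheory GRing.Theory Num.Theory.
Local Open Scope ring_scope.

(* Write [l_i = (c_i, y_i)] with [c_i >= |y_i|].  Householder reflections
   replace the [y_i] by vectors [z_i] of [R^m] with the same Gram matrix and
   [m <= rank X <= 2K], where [K = (rank X + 1) / 2].  Given [2K] pairwise
   anticommuting Hermitian involutions [g_j] of size [2^K], the matrix
   [N_i = c_i + sum_j z_ij g_j] has eigenvalues [c_i +- |z_i| >= 0] and
   [Tr (N_i N_j) = 2^K <l_i, l_j>], so the [N_i / sqrt (2^K)] form a cpsd
   factorization of size [2^K]. *)

Section HermitianMatrices.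
Variable C : numClosedFieldType.

Definition hermmx d (A : 'M[C]_d) : Prop := (map_mx Num.conj A)^T = A.

Definition cform d (v : 'cV[C]_d) (A : 'M[C]_d) : C :=
  ((map_mx Num.conj v)^T *m A *m v) 0 0.

Definition psdmx d (A : 'M[C]_d) : Prop := forall v, 0 <= cform v A.

Lemma hermmxD d (A B : 'M[C]_d) : hermmx A -> hermmx B -> hermmx (A + B).
Proof. by rewrite /hermmx map_mxD linearD /= => -> ->. Qed.

Lemma hermmxZ d a (A : 'M[C]_d) : a^* = a -> hermmx A -> hermmx (a *: A).
Proof. by rewrite /hermmx map_mxZ linearZ /= => -> ->. Qed.

Lemma hermmx_scalar d a : a^* = a -> hermmx (a%:M : 'M[C]_d).
Proof. by move=> a_real; rewrite /hermmx map_scalar_mx tr_scalar_mx; congr _%:M. Qed.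

Lemma hermmx_sum d I (r : seq I) (P : pred I) (F : I -> 'M[C]_d) :
  (forall i, P i -> hermmx (F i)) -> hermmx (\sum_(i <- r | P i) F i).
Proof.
move=> hF; apply: (big_ind (@hermmx d)) => //.
  by rewrite /hermmx map_mx0 trmx0.
exact: hermmxD.
Qed.

Lemma cformD d (v : 'cV[C]_d) A B : cform v (A + B) = cform v A + cform v B.
Proof. by rewrite /cform mulmxDr mulmxDl mxE. Qed.

Lemma cformZ d (v : 'cV[C]_d) a A : cform v (a *: A) = a * cform v A.
Proof. by rewrite /cform -scalemxAr -scalemxAl mxE. Qed.

Lemma cform_scalar d (v : 'cV[C]_d) a : cform v a%:M = a * cform v 1%:M.
Proof. by rewrite -cformZ scalemx1. Qed.

Lemma cform1E d (v : 'cV[C]_d) : cform v 1%:M = \sum_i (v i 0)^* * v i 0.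
Proof. by rewrite /cform mulmx1 mxE; apply: eq_bigr => i _; rewrite !mxE. Qed.

Lemma cform1_ge0 d (v : 'cV[C]_d) : 0 <= cform v 1%:M.
Proof. by rewrite cform1E sumr_ge0 // => i _; rewrite mulrC mul_conjC_ge0. Qed.

Lemma cform1_eq0 d (v : 'cV[C]_d) : cform v 1%:M = 0 -> v = 0.
Proof.
rewrite cform1E => /psumr_eq0P v0; apply/matrixP => i j.
rewrite ord1 mxE; apply/eqP; rewrite -mul_conjC_eq0 mulrC v0 //.
by move=> k _; rewrite mulrC mul_conjC_ge0.
Qed.

Lemma cform_sqr_herm d (v : 'cV[C]_d) A :
  hermmx A -> cform v (A *m A) = cform (A *m v) 1%:M.
Proof.
by move=> hA; rewrite /cform mulmx1 map_mxM trmx_mul hA !mulmxA.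
Qed.

(* [N := c + A] satisfies [N^2 = 2c N + (s - c^2)], so [2c <v, N v>] is
   [|N v|^2 + (c^2 - s)|v|^2]; when [c = 0] this forces [N v = 0]. *)
Lemma psdmx_scalar_add d (A : 'M[C]_d) (s c : C) :
  hermmx A -> A *m A = s%:M -> 0 <= s -> s <= c ^+ 2 -> 0 <= c ->
  psdmx (c%:M + A).
Proof.
move=> hA AA s_ge0 s_le c_ge0 v; set N := c%:M + A.
have hN : hermmx N by apply: hermmxD => //; apply/hermmx_scalar/geC0_conj.
have NN : N *m N = (c *+ 2) *: N + (s - c ^+ 2)%:M.
  rewrite /N mulmxDl !mulmxDr -scalar_mxM AA mul_scalar_mx mul_mx_scalar.
  by apply/matrixP => i j; rewrite !mxE; case: (i == j); rewrite ?mulr1n ?mulr0n; ring.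
clearbody N.
have key : c *+ 2 * cform v N =
    cform (N *m v) 1%:M + (c ^+ 2 - s) * cform v 1%:M.
  by rewrite -cform_sqr_herm // NN cformD cformZ cform_scalar; ring.
have [c0|c_neq0] := eqVneq c 0; last first.
  have c2_gt0 : 0 < c *+ 2 by rewrite mulrn_wgt0 // lt_def c_neq0.
  rewrite -(pmulr_rge0 _ c2_gt0) key addr_ge0 ?cform1_ge0 //.
  by rewrite mulr_ge0 ?cform1_ge0 ?subr_ge0.
have s0 : s = 0 by apply/le_anti; rewrite s_ge0 andbT; move: s_le; rewrite c0 expr0n.
move: key; rewrite c0 s0 expr0n subrr mul0r addr0 mul0rn mul0r.
move=> /esym/cform1_eq0 Nv0.
by rewrite /cform -mulmxA Nv0 mulmx0 mxE.
Qed.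

End HermitianMatrices.

Section Clifford.
Variable C : numClosedFieldType.

Definition acomm d (A B : 'M[C]_d) : 'M[C]_d := A *m B + B *m A.

Lemma acommC d (A B : 'M[C]_d) : acomm A B = acomm B A.
Proof. exact: addrC. Qed.

Definition diag_blk d (A : 'M[C]_d) : 'M[C]_(d + d) := block_mx A 0 0 (- A).

Definition antidiag_blk {d} (a b : C) : 'M[C]_(d + d) := block_mx 0 a%:M b%:M 0.

Lemma acomm_diag_blk d (A B : 'M[C]_d) a :
  acomm A B = a%:M -> acomm (diag_blk A) (diag_blk B) = a%:M.
Proof.
move=> AB; rewrite /acomm !mulmx_block add_block_mx !mulmx0 !mul0mx !addr0 !add0r.
by rewrite !mulmxN !mulNmx !opprK -!/(acomm _ _) AB -scalar_mx_block.
Qed.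

Lemma acomm_diag_antidiag_blk d (A : 'M[C]_d) a b :
  acomm (diag_blk A) (antidiag_blk a b) = 0.
Proof.
rewrite /acomm !mulmx_block add_block_mx !mulmx0 !mul0mx !addr0 !add0r.
rewrite mulmxN mulNmx !mul_mx_scalar !mul_scalar_mx -block_mx0.
by congr block_mx; rewrite ?addNr ?addrN.
Qed.

Lemma acomm_antidiag_blk d (a b a' b' : C) :
  acomm (antidiag_blk a b) (antidiag_blk a' b') = (a * b' + a' * b)%:M :> 'M_(d + d).
Proof.
rewrite /acomm !mulmx_block add_block_mx !mulmx0 !mul0mx !addr0 !add0r.
rewrite -!scalar_mxM -!raddfD /= (scalar_mx_block d d).
by congr block_mx; congr _%:M; ring.
Qed.

Lemma hermmx_diag_blk d (A : 'M[C]_d) : hermmx A -> hermmx (diag_blk A).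
Proof.
rewrite /hermmx map_block_mx tr_block_mx !map_mx0 !trmx0 map_mxN linearN /=.
by move=> ->.
Qed.

Lemma hermmx_antidiag_blk d (a : C) : hermmx (antidiag_blk a a^* : 'M_(d + d)).
Proof.
rewrite /hermmx map_block_mx tr_block_mx !map_mx0 !trmx0 !map_scalar_mx.
by rewrite !tr_scalar_mx /= conjCK.
Qed.

Lemma mxtrace_diag_blk d (A : 'M[C]_d) : \tr (diag_blk A) = 0.
Proof. by rewrite mxtrace_block linearN /= subrr. Qed.

Lemma mxtrace_antidiag_blk d (a b : C) : \tr (antidiag_blk a b : 'M_(d + d)) = 0.
Proof. by rewrite mxtrace_block !mxtrace0 addr0. Qed.

Fixpoint clifford_size k : nat :=
  if k is k'.+1 then (clifford_size k' + clifford_size k')%N else 1%N.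

Lemma clifford_sizeE k : clifford_size k = (2 ^ k)%N.
Proof. by elim: k => //= k ->; rewrite expnS mul2n addnn. Qed.

(* The Brauer-Weyl construction of [2k] anticommuting Hermitian involutions
   (generators [j < 2k]; other indices carry junk values). *)
Fixpoint clifford_gen k j : 'M[C]_(clifford_size k) :=
  if k is k'.+1 then
    if (j < 2 * k')%N then diag_blk (clifford_gen k' j)
    else let w := if j == (2 * k')%N then 1 else - 'i in antidiag_blk w w^*
  else 0.

Lemma hermmx_clifford_gen k j : hermmx (clifford_gen k j).
Proof.
elim: k => [|k IH] /=; first by rewrite /hermmx map_mx0 trmx0.
by case: ifP => _; [exact: hermmx_diag_blk | exact: hermmx_antidiag_blk].
Qed.

Lemma mxtrace_clifford_gen k j : \tr (clifford_gen k j) = 0.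
Proof.
case: k => [|k] /=; first exact: mxtrace0.
by case: ifP => _; [exact: mxtrace_diag_blk | exact: mxtrace_antidiag_blk].
Qed.

Lemma acomm_clifford_gen k j l : (j < 2 * k)%N -> (l < 2 * k)%N ->
  acomm (clifford_gen k j) (clifford_gen k l) = ((j == l)%:R *+ 2)%:M.
Proof.
elim: k j l => [|k IH] j l //= jk lk.
have [jk'|kj] := ltnP j (2 * k); have [lk'|kl] := ltnP l (2 * k).
- exact/acomm_diag_blk/IH.
- by rewrite acomm_diag_antidiag_blk (ltn_eqF (leq_trans jk' kl)) mul0rn raddf0.
- by rewrite acommC acomm_diag_antidiag_blk (gtn_eqF (leq_trans lk' kj)) mul0rn raddf0.
rewrite acomm_antidiag_blk; congr _%:M.
have conjNi : (- 'i)^* = 'i :> C by rewrite raddfN /= conjCi opprK.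
have sqrNi : - 'i * 'i = 1 :> C by rewrite mulNr -expr2 sqrCi opprK.
have [jE|jE] := eqVneq j (2 * k)%N; have [lE|lE] := eqVneq l (2 * k)%N.
- by rewrite jE lE eqxx rmorph1 mulr1 mulr2n.
- have -> : (j == l) = false by rewrite jE eq_sym; exact/negbTE.
  by rewrite conjNi rmorph1 mulr1 mul1r subrr mulr0n mul0rn.
- have -> : (j == l) = false by rewrite lE; exact/negbTE.
  by rewrite conjNi rmorph1 mulr1 mul1r addNr mulr0n mul0rn.
have -> : j = l by lia.
by rewrite eqxx conjNi sqrNi mulr2n.
Qed.

End Clifford.

Section SpinFactor.
Variables (C : numClosedFieldType) (d m : nat) (g : 'I_m -> 'M[C]_d).
Hypothesis g_herm : forall j, hermmx (g j).
Hypothesis g_tr0 : forall j, \tr (g j) = 0.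
Hypothesis g_acomm : forall j l, acomm (g j) (g l) = ((j == l)%:R *+ 2)%:M.

Lemma mulmxn2I (A B : 'M[C]_d) : A *+ 2 = B *+ 2 -> A = B.
Proof.
move/matrixP => AB; apply/matrixP => i j; apply/eqP.
by have := AB i j; rewrite !mulmxnE => /eqP; rewrite eqrMn2r.
Qed.

Lemma acomm_lincomb (a b : 'I_m -> C) :
  acomm (\sum_j a j *: g j) (\sum_j b j *: g j) = ((\sum_j a j * b j) *+ 2)%:M.
Proof.
have mulE a' b' : (\sum_j a' j *: g j) *m (\sum_l b' l *: g l) =
    \sum_j \sum_l (a' j * b' l) *: (g j *m g l).
  rewrite mulmx_suml; apply: eq_bigr => j _; rewrite mulmx_sumr.
  by apply: eq_bigr => l _; rewrite -scalemxAl -scalemxAr scalerA.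
rewrite /acomm !mulE [X in _ + X]exchange_big -big_split /=.
rewrite raddfMn raddf_sum -sumrMnl; apply: eq_bigr => j _.
rewrite -big_split (bigD1 j) //= big1 => [|l lj].
  rewrite [b j * _]mulrC -scalerDr -/(acomm _ _) g_acomm eqxx scale_scalar_mx.
  by rewrite addr0 mulrnAr mulr1 raddfMn.
rewrite [b l * _]mulrC -scalerDr -/(acomm _ _) g_acomm eq_sym (negbTE lj).
by rewrite mul0rn raddf0 scaler0.
Qed.

Definition spin_mx (c : C) (z : 'I_m -> C) : 'M[C]_d := c%:M + \sum_j z j *: g j.

Lemma lincomb_sqr (z : 'I_m -> C) :
  (\sum_j z j *: g j) *m (\sum_j z j *: g j) = (\sum_j z j ^+ 2)%:M.
Proof.
apply: mulmxn2I; rewrite mulr2n -[_ + _]/(acomm _ _) acomm_lincomb raddfMn.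
by under eq_bigr do rewrite -expr2.
Qed.

Lemma mxtrace_lincomb (z : 'I_m -> C) : \tr (\sum_j z j *: g j) = 0.
Proof. by rewrite raddf_sum big1 // => j _; rewrite /= mxtraceZ g_tr0 mulr0. Qed.

Lemma mxtrace_spin_mul c z c' z' :
  \tr (spin_mx c z *m spin_mx c' z') = (c * c' + \sum_j z j * z' j) *+ d.
Proof.
set A := \sum_j z j *: g j; set A' := \sum_j z' j *: g j.
have trAA' : \tr (A *m A') = (\sum_j z j * z' j) *+ d.
  have /eqP : \tr (A *m A') *+ 2 = (\sum_j z j * z' j) *+ d *+ 2.
    rewrite [RHS]mulrnAC -[RHS]mxtrace_scalar -acomm_lincomb.
    by rewrite mxtraceD mxtrace_mulC mulr2n.
  by rewrite eqrMn2r => /eqP.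
rewrite /spin_mx -/A -/A' mulmxDl !mulmxDr -scalar_mxM mul_scalar_mx mul_mx_scalar.
rewrite !mxtraceD !mxtraceZ !mxtrace_lincomb trAA' mxtrace_scalar.
by rewrite !mulr0 addr0 add0r mulrnDl.
Qed.

Lemma hermmx_lincomb z : (forall j, z j \is Num.real) ->
  hermmx (\sum_j z j *: g j).
Proof.
move=> z_real; apply: hermmx_sum => j _.
by apply: hermmxZ; [exact: conj_Creal | exact: g_herm].
Qed.

Lemma hermmx_spin c z : c \is Num.real -> (forall j, z j \is Num.real) ->
  hermmx (spin_mx c z).
Proof.
move=> c_real z_real.
by apply: hermmxD; [exact/hermmx_scalar/conj_Creal | exact: hermmx_lincomb].
Qed.

Lemma psdmx_spin c z : 0 <= c -> (forall j, z j \is Num.real) ->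
  \sum_j z j ^+ 2 <= c ^+ 2 -> psdmx (spin_mx c z).
Proof.
move=> c_ge0 z_real z_le; apply: psdmx_scalar_add z_le c_ge0 => //.
- exact: hermmx_lincomb.
- exact: lincomb_sqr.
- by apply: sumr_ge0 => j _; rewrite -realEsqr.
Qed.

End SpinFactor.

Section RealGram.
Variable R : rcfType.

Lemma row_gram_ge0 k (u : 'rV[R]_k) : 0 <= (u *m u^T) 0 0.
Proof. by rewrite mxE sumr_ge0 // => i _; rewrite mxE -expr2 sqr_ge0. Qed.

Lemma row_gram_eq0 k (u : 'rV[R]_k) : (u *m u^T) 0 0 = 0 -> u = 0.
Proof.
have u2_ge0 j : true -> 0 <= u 0 j * u^T j 0 by rewrite mxE -expr2 sqr_ge0.
rewrite mxE => /(psumr_eq0P u2_ge0) u0; apply/matrixP => i j.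
rewrite ord1 mxE; apply/eqP; rewrite -sqrf_eq0.
by have := u0 j isT; rewrite mxE -expr2 => ->.
Qed.

(* The Householder reflection along [u - v]. *)
Lemma reflection_map k (u v : 'rV[R]_k) :
  u *m u^T = v *m v^T -> exists H : 'M[R]_k, H *m H^T = 1%:M /\ u *m H = v.
Proof.
move=> uv; have [<-|u_neq_v] := eqVneq u v.
  by exists 1%:M; rewrite trmx1 !mulmx1.
set w := u - v; set W := w^T *m w; set t := (u *m w^T) 0 0.
have vu : v *m u^T = u *m v^T.
  by rewrite -{1}[v]trmxK -trmx_mul; apply/matrixP => i j; rewrite !ord1 mxE.
have ww : w *m w^T = (t *+ 2)%:M.
  rewrite [LHS]mx11_scalar; congr _%:M.
  rewrite /t /w linearB /= !mulmxBl !mulmxBr -uv vu !mxE; ring.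
have t_neq0 : t != 0.
  apply: contra u_neq_v => /eqP t0; rewrite -subr_eq0 -/w; apply/eqP/row_gram_eq0.
  by rewrite ww t0 mul0rn mxE mul0rn.
have WW : W *m W = (t *+ 2) *: W.
  by rewrite /W mulmxA -(mulmxA _ w) ww mul_mx_scalar -scalemxAl.
set H := 1%:M - t^-1 *: W.
have HT : H^T = H by rewrite /H linearB linearZ /= trmx1 /W trmx_mul trmxK.
exists H; split.
  rewrite HT /H mulmxBl mulmxBr !mul1mx mulmxBr mulmx1.
  rewrite -scalemxAl -scalemxAr WW !scalerA.
  have -> : t^-1 / t * (t *+ 2) = t^-1 + t^-1 by field.
  by rewrite scalerDl opprB addrK subrK.
rewrite mulmxBr mulmx1 -scalemxAr /W mulmxA [u *m _]mx11_scalar -/t mul_scalar_mx.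
by rewrite scalerA mulVf // scale1r /w opprB addrC subrK.
Qed.

Lemma kernel_trmx_vector n k (Y : 'M[R]_(n, k)) : (\rank Y < k)%N ->
  exists2 v : 'rV[R]_k, v != 0 & Y *m v^T = 0.
Proof.
move=> rY; have : kermx Y^T != 0.
  by rewrite -mxrank_eq0 mxrank_ker mxrank_tr -lt0n subn_gt0.
case/rowV0Pn => v vK v_neq0; exists v => //.
by apply/trmx_inj; rewrite trmx_mul trmxK trmx0; apply/sub_kermxP.
Qed.

(* Reflect a unit kernel vector of [Y^T] onto the first axis: the first
   column of [Y H^T] then vanishes. *)
Lemma gram_drop_column n k (Y : 'M[R]_(n, 1 + k)) : (\rank Y <= k)%N ->
  exists Y' : 'M[R]_(n, k), Y' *m Y'^T = Y *m Y^T /\ (\rank Y' <= \rank Y)%N.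
Proof.
move=> rY; have [v v_neq0 Yv] := @kernel_trmx_vector _ _ Y rY.
set e : 'rV[R]_(1 + k) := delta_mx 0 0.
set a := Num.sqrt ((v *m v^T) 0 0).
have a_gt0 : 0 < a.
  rewrite sqrtr_gt0 lt_def row_gram_ge0 andbT.
  by apply: contra v_neq0 => /eqP/row_gram_eq0 ->.
have [H [HH eH]] : exists H : 'M_(1 + k), H *m H^T = 1%:M /\ e *m H = a^-1 *: v.
  apply: reflection_map; rewrite linearZ /= -scalemxAl -scalemxAr scalerA.
  rewrite [v *m _]mx11_scalar -/a scale_scalar_mx -expr2 exprVn.
  rewrite -[X in _ * X](sqr_sqrtr (row_gram_ge0 v)) -/a mulVf ?expf_neq0 ?gt_eqF //.
  by apply/matrixP => i j; rewrite /e trmx_delta mul_delta_mx !ord1 !mxE.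
set Y2 := Y *m H^T.
have Y2e : Y2 *m e^T = 0.
  by rewrite /Y2 -mulmxA -trmx_mul eH linearZ /= -scalemxAr Yv scaler0.
have lY2 : lsubmx Y2 = 0.
  apply/matrixP => i j; rewrite [LHS]mxE [RHS]mxE ord1.
  move/matrixP: Y2e => /(_ i 0); rewrite /e trmx_delta -colE [LHS]mxE [RHS]mxE.
  by rewrite (_ : lshift k 0 = 0) //; exact: val_inj.
exists (rsubmx Y2); split.
  have <- : Y2 *m Y2^T = Y *m Y^T.
    by rewrite trmx_mul trmxK mulmxA -(mulmxA Y) (mulmx1C HH) mulmx1.
  by rewrite -[Y2 in RHS]hsubmxK tr_row_mx mul_row_col lY2 mul0mx add0r.
have -> : rsubmx Y2 = Y2 *m col_mx 0 1%:M.
  by rewrite -[Y2 in RHS]hsubmxK mul_row_col mulmx0 add0r mulmx1.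
by apply: leq_trans (mxrankM_maxl _ _) _; exact: mxrankM_maxl.
Qed.

Lemma gram_factor_rank n k (Y : 'M[R]_(n, k)) :
  exists m (Z : 'M[R]_(n, m)), (m <= \rank Y)%N /\ Z *m Z^T = Y *m Y^T.
Proof.
elim: k Y => [|k IH] Y; first by exists 0%N, Y.
have [rY|rY] := leqP k.+1 (\rank Y); first by exists k.+1, Y.
have [Y' [Y'Y rY']] := gram_drop_column (rY : (\rank Y <= k)%N).
have [m [Z [rZ ZZ]]] := IH Y'.
by exists m, Z; split; [exact: leq_trans rY' | rewrite ZZ].
Qed.

Lemma mxrank_gram n p (A : 'M[R]_(n, p)) : (\rank A <= \rank (A *m A^T))%N.
Proof.
have ker_sub : (kermx (A *m A^T) <= kermx A)%MS.
  apply/row_subP => i; set r := row i _.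
  have rAA : r *m (A *m A^T) = 0 by apply/sub_kermxP; exact: row_sub.
  apply/sub_kermxP/row_gram_eq0.
  by rewrite trmx_mul mulmxA -(mulmxA r) rAA mul0mx mxE.
have := mxrankS ker_sub; rewrite !mxrank_ker.
have := rank_leq_row A; have := rank_leq_row (A *m A^T); lia.
Qed.

End RealGram.

Lemma gram_lorentz_spin_data (R : realType) n (X : 'M[R]_n) : gram_lorentz X ->
  exists m (c : 'I_n -> R) (Z : 'M[R]_(n, m)),
    [/\ (m <= \rank X)%N, forall i, 0 <= c i,
        forall i, \sum_j Z i j ^+ 2 <= c i ^+ 2
      & forall i j, X i j = c i * c j + \sum_l Z i l * Z j l].
Proof.
case=> k [l [l_cone Xl]].
set L : 'M[R]_(n, 1 + k) := \matrix_(i, j) l i 0 j.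
have XL : X = L *m L^T.
  by apply/matrixP => i j; rewrite Xl /rdot !mxE; apply: eq_bigr => b _; rewrite !mxE.
set Y := rsubmx L; pose c i := lsubmx (l i) 0 0.
have c_ge0 i : 0 <= c i by apply: le_trans (l_cone i); exact: sqrtr_ge0.
have [m [Z [rZ ZZ]]] := gram_factor_rank Y.
have ZZE i j : (Z *m Z^T) i j = \sum_b Z i b * Z j b.
  by rewrite mxE; apply: eq_bigr => b _; rewrite mxE.
have ZZii i : \sum_b Z i b ^+ 2 = \sum_b rsubmx (l i) 0 b ^+ 2.
  rewrite (eq_bigr _ (fun b _ => expr2 _)) -ZZE ZZ mxE.
  by apply: eq_bigr => b _; rewrite !mxE expr2.
exists m, c, Z; split => // [|i|i j].
- apply: leq_trans rZ _; rewrite XL; apply: leq_trans _ (mxrank_gram L).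
  have -> : Y = L *m col_mx 0 1%:M.
    by rewrite -{1}(hsubmxK L) mul_row_col mulmx0 add0r mulmx1.
  exact: mxrankM_maxl.
- by rewrite ZZii -ler_sqrt ?sqr_ge0 // sqrtr_sqr ger0_norm //; exact: l_cone.
 rewrite -ZZE ZZ XL -[in LHS](hsubmxK L) tr_row_mx mul_row_col mxE.
by congr (_ + _); rewrite mxE big_ord1 /c !mxE.
Qed.

Lemma real_complex_real (R : rcfType) (x : R) : x%:C%C \is Num.real.
Proof. by apply/complex_realP; exists x. Qed.

Lemma cpsd_factorization_spin (R : realType) n m K (X : 'M[R]_n)
    (c : 'I_n -> R) (Z : 'M[R]_(n, m)) :
  (m <= 2 * K)%N -> (forall i, 0 <= c i) ->
  (forall i, \sum_j Z i j ^+ 2 <= c i ^+ 2) ->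
  (forall i j, X i j = c i * c j + \sum_l Z i l * Z j l) ->
  cpsd_factorization X (2 ^ K).
Proof.
move=> mK c_ge0 Z_le XE; rewrite -(clifford_sizeE K); set d := clifford_size K.
pose g (j : 'I_m) : 'M[R[i]]_d := clifford_gen R[i] K j.
have g_herm j : hermmx (g j) := hermmx_clifford_gen _ _ _.
have g_tr0 j : \tr (g j) = 0 := mxtrace_clifford_gen _ _ _.
have g_acomm j l : acomm (g j) (g l) = ((j == l)%:R *+ 2)%:M.
  by apply: acomm_clifford_gen; apply: leq_trans mK.
have Z_real i j : (Z i j)%:C%C \is Num.real := real_complex_real _.
pose N i := spin_mx g (c i)%:C%C (fun j => (Z i j)%:C%C).
pose s : R[i] := sqrtC d%:R^-1.
have s_ge0 : 0 <= s by rewrite sqrtC_ge0 invr_ge0 ler0n.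
exists (fun i => s *: N i); split => [i|i j].
  split.
    exact/(hermmxZ (geC0_conj s_ge0))/hermmx_spin/Z_real/real_complex_real.
  move=> v; rewrite -[X in 0 <= X]/(cform v _) cformZ mulr_ge0 //.
  apply: (psdmx_spin g_herm g_acomm) (Z_real i) _ v; first by rewrite lecR.
  rewrite -rmorphXn -(eq_bigr _ (fun j _ => rmorphXn _ _ _)) -rmorph_sum lecR.
  exact: Z_le.
rewrite -scalemxAl -scalemxAr !linearZ /= mxtrace_spin_mul //.
have d_neq0 : d%:R != 0 :> R[i] by rewrite pnatr_eq0 /d clifford_sizeE expn_eq0.
rewrite mulrA -expr2 sqrtCK -[X in _ * X]mulr_natr mulrCA mulVf // mulr1.
rewrite XE rmorphD rmorphM rmorph_sum.
by congr (_ + _); apply: eq_bigr => l _; rewrite rmorphM.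
Qed.

Theorem theorem4p8 (R : realType) (n : nat) (X : 'M[R]_n) :
  gram_lorentz X ->
  cpsd X /\
  exists d : nat,
    (1 <= d)%N /\ (d <= 2 ^ ((\rank X + 1) %/ 2))%N /\ cpsd_factorization X d.
Proof.
move=> /gram_lorentz_spin_data [m [c [Z [mX c_ge0 Z_le XE]]]].
set K := ((\rank X + 1) %/ 2)%N.
have mK : (m <= 2 * K)%N by rewrite /K; lia.
have fX := cpsd_factorization_spin mK c_ge0 Z_le XE.
have d_ge1 : (1 <= 2 ^ K)%N by rewrite expn_gt0.
by split; exists (2 ^ K)%N.
Qed.
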